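(* Let $R$ be a UFD with fraction field $K$, let $A(X), B(X)\in R[X]$ with $A(0)=B(0)=0$, and let $b\in R\setminus\{0\}$ with $\gcd(B,b)=1$. If $A\!\left(\frac{B(X)}{b}\right)\in R[X]$, then there exists $C(X)\in R[X]$ with $A(X)=C(bX)$; equivalently, for every $k\ge1$ the coefficient of $X^k$ in $A(X)$ is divisible by $b^k$.
   Context: For a polynomial $P\in R[X]$ and $c\in R$, $\gcd(P,c)=1$ means that no prime element of $R$ divides both $c$ and all coefficients of $P$. *)

From HB Require Import structures.
From mathcomp Require Import all_boot all_order all_algebra.
Set Implicit Arguments. Unset Strict Implicit. Unset Printing Implicit Defensive.
Import Order.TTheory GRing.Theory Num.Theory.
Local Open Scope ring_scope.

Section UFDDefs.
Variable R : idomainType.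

Definition dvdR (a b : R) : Prop := exists c : R, b = c * a.

Definition associated (a b : R) : Prop :=
  exists u : R, u \is a GRing.unit /\ b = u * a.

Definition irreducibleR (a : R) : Prop :=
  a != 0 /\ a \isn't a GRing.unit /\
  forall x y : R, a = x * y -> x \is a GRing.unit \/ y \is a GRing.unit.

Definition primeR (p : R) : Prop :=
  p != 0 /\ p \isn't a GRing.unit /\
  forall a b : R, dvdR p (a * b) -> dvdR p a \/ dvdR p b.

Definition is_UFD : Prop :=
  (forall a : R, a != 0 -> a \isn't a GRing.unit ->
     exists s : seq R, (forall x, x \in s -> irreducibleR x) /\
                       a = \prod_(x <- s) x) /\
  (forall s t : seq R,
     (forall x, x \in s -> irreducibleR x) ->
     (forall x, x \in t -> irreducibleR x) ->
     associated (\prod_(x <- s) x) (\prod_(x <- t) x) ->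
     exists t' : seq R, perm_eq t t' /\ size s = size t' /\
       forall i, (i < size s)%N -> associated (nth 0 s i) (nth 0 t' i)).

(* gcd(P, c) = 1 : no prime element divides c and all coefficients of P *)
Definition poly_const_coprime (P : {poly R}) (c : R) : Prop :=
  forall p : R, primeR p -> dvdR p c -> (forall i, dvdR p P`_i) -> False.

End UFDDefs.

From HB Require Import structures.
From mathcomp Require Import all_boot all_order all_algebra.
From Stdlib Require Import Classical ClassicalEpsilon.
Set Implicit Arguments. Unset Strict Implicit. Unset Printing Implicit Defensive.
Import Order.TTheory GRing.Theory Num.Theory.
Local Open Scope ring_scope.

(* Let n = size A and let
     homog n b A = \sum_(i < n) A_i b^(n - i) X^i,
   so that over the fraction field homog n b A = b^n A(X / b).  The hypothesis
   A(B / b) = Q in R[X] then becomes the integral identity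
     (homog n b A) \Po B = b^n Q.
   Write b^n = u * q_1 * ... * q_m with u a unit and q_j irreducible, hence
   prime in the UFD R.  No q_j divides B (gcd(B, b) = 1), and B(0) = 0.  The key
   lemma says that a prime p with p | C \Po B, p not dividing B and B(0) = 0
   divides C: reduce B mod p to B' of positive degree whose leading coefficient
   is prime to p; then lead(C \Po B') = lead(C) lead(B')^deg C shows p | lead C,
   and we conclude by induction after removing the leading term of C.
   Applying it to q_1, ..., q_m in turn gives b^n | homog n b A, i.e.
   b^k | A_k for every k, and then A = C \Po (b X) where C_k = A_k / b^k. *)

Section Divisibility.
Variable R : idomainType.
Implicit Types (d c p x y : R) (P Q B C D : {poly R}).

Definition dvdP d P : Prop := forall i, dvdR d P`_i.

Lemma dvdR0 d : dvdR d 0. Proof. by exists 0; rewrite mul0r. Qed.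

Lemma dvdRD d x y : dvdR d x -> dvdR d y -> dvdR d (x + y).
Proof. by move=> [c1 ->] [c2 ->]; exists (c1 + c2); rewrite mulrDl. Qed.

Lemma dvdRN d x : dvdR d x -> dvdR d (- x).
Proof. by move=> [c ->]; exists (- c); rewrite mulNr. Qed.

Lemma dvdRMl d x y : dvdR d x -> dvdR d (y * x).
Proof. by move=> [c ->]; exists (y * c); rewrite mulrA. Qed.

Lemma dvdR_trans d x y : dvdR d x -> dvdR x y -> dvdR d y.
Proof. by move=> [c ->] [c' ->]; exists (c' * c); rewrite mulrA. Qed.

Lemma dvdR_sum d I (r : seq I) (F : I -> R) :
  (forall i, dvdR d (F i)) -> dvdR d (\sum_(i <- r) F i).
Proof. by move=> dF; apply: big_ind => //; [apply: dvdR0 | apply: dvdRD]. Qed.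

Lemma dvdR_prod_mem x (s : seq R) : x \in s -> dvdR x (\prod_(y <- s) y).
Proof.
by move=> x_s; rewrite (big_rem x x_s) /= mulrC; exists (\prod_(y <- rem x s) y).
Qed.

Lemma primeR_dvdX p x n : primeR p -> dvdR p (x ^+ n) -> dvdR p x.
Proof.
move=> [_ [p_nunit p_prime]]; elim: n => [|n IHn].
  rewrite expr0 => -[c c_p]; case/negP: p_nunit.
  by apply/unitrPr; exists c; rewrite mulrC c_p.
by rewrite exprS => /p_prime [//|/IHn].
Qed.

Lemma dvdP0 d : dvdP d 0. Proof. by move=> i; rewrite coef0; apply: dvdR0. Qed.

Lemma dvdPD d P Q : dvdP d P -> dvdP d Q -> dvdP d (P + Q).
Proof. by move=> dP dQ i; rewrite coefD; apply: dvdRD. Qed.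

Lemma dvdPN d P : dvdP d P -> dvdP d (- P).
Proof. by move=> dP i; rewrite coefN; apply: dvdRN. Qed.

Lemma dvdPB d P Q : dvdP d P -> dvdP d Q -> dvdP d (P - Q).
Proof. by move=> dP /dvdPN; apply: dvdPD. Qed.

Lemma dvdPMl d P Q : dvdP d P -> dvdP d (Q * P).
Proof. by move=> dP i; rewrite coefM; apply: dvdR_sum => j; apply: dvdRMl. Qed.

Lemma dvdPMr d P Q : dvdP d P -> dvdP d (P * Q).
Proof. by rewrite mulrC; apply: dvdPMl. Qed.

Lemma dvdPZl d c P : dvdR d c -> dvdP d (c *: P).
Proof. by move=> dc i; rewrite coefZ mulrC; apply: dvdRMl. Qed.

Lemma dvdPZr d c P : dvdP d P -> dvdP d (c *: P).
Proof. by move=> dP i; rewrite coefZ; apply: dvdRMl. Qed.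

Lemma dvdP_sum d I (r : seq I) (F : I -> {poly R}) :
  (forall i, dvdP d (F i)) -> dvdP d (\sum_(i <- r) F i).
Proof. by move=> dF; apply: big_ind => //; [apply: dvdP0 | apply: dvdPD]. Qed.

Lemma dvdP_compl d D B : dvdP d D -> dvdP d (D \Po B).
Proof.
by move=> dD; rewrite comp_polyE; apply: dvdP_sum => i; apply: dvdPZl.
Qed.

Lemma dvdP_subX d B B' n : dvdP d (B - B') -> dvdP d (B ^+ n - B' ^+ n).
Proof.
move=> dB; elim: n => [|n IHn]; first by rewrite subrr; apply: dvdP0.
have -> : B ^+ n.+1 - B' ^+ n.+1 = (B - B') * B ^+ n + B' * (B ^+ n - B' ^+ n).
  by rewrite !exprS mulrBl mulrBr addrA subrK.
by apply: dvdPD; [apply: dvdPMr | apply: dvdPMl].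
Qed.

Lemma dvdP_compr d C B B' : dvdP d (B - B') -> dvdP d ((C \Po B) - (C \Po B')).
Proof.
move=> dB; rewrite !comp_polyE -sumrB; apply: dvdP_sum => i.
by rewrite -scalerBr; apply/dvdPZr/dvdP_subX.
Qed.

Definition drop_lead P : {poly R} := take_poly (size P).-1 P.

Lemma drop_lead_split P : P = drop_lead P + lead_coef P *: 'X^((size P).-1).
Proof.
apply/polyP => i; rewrite coefD coef_take_poly coefZ coefXn lead_coefE.
case: ltngtP => [lt_i|lt_pi|->]; rewrite ?mulr0 ?addr0 ?add0r ?mulr1 //.
by rewrite nth_default ?mulr0 //; apply: leq_trans lt_pi; apply: leqSpred.
Qed.

Lemma size_drop_lead P : P != 0 -> (size (drop_lead P) < size P)%N.
Proof.
rewrite -size_poly_gt0 => P_gt0.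
by apply: leq_ltn_trans (size_take_poly _ _) _; rewrite prednK.
Qed.

Lemma dvdP_sub_drop_lead d P : dvdR d (lead_coef P) -> dvdP d (P - drop_lead P).
Proof.
by move=> d_lead; rewrite {1}[P]drop_lead_split addrAC subrr add0r; apply: dvdPZl.
Qed.

Lemma dvdP_drop_lead d P : dvdR d (lead_coef P) ->
  dvdP d P <-> dvdP d (drop_lead P).
Proof.
move/dvdP_sub_drop_lead => dPD; split=> [dP | dD].
  by rewrite -(subKr P (drop_lead P)); apply: dvdPB.
by rewrite -(subrK (drop_lead P) P); apply: dvdPD.
Qed.

Lemma poly_size_ind (Pr : {poly R} -> Prop) :
  (forall P, (forall Q, (size Q < size P)%N -> Pr Q) -> Pr P) -> forall P, Pr P.
Proof.
move=> IH P; have [n] := ubnP (size P); elim: n P => // n IHn P lt_Pn.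
by apply: IH => Q lt_QP; apply: IHn; apply: leq_trans lt_QP _.
Qed.

Lemma congr_lead_nondvd d B : ~ dvdP d B ->
  exists B', dvdP d (B - B') /\ ~ dvdR d (lead_coef B').
Proof.
elim/poly_size_ind: B => B IH ndB.
have [d_lead | nd_lead] := classic (dvdR d (lead_coef B)); last first.
  by exists B; split=> //; rewrite subrr; apply: dvdP0.
have B_neq0 : B != 0 by apply: contra_notN ndB => /eqP ->; apply: dvdP0.
have ndD : ~ dvdP d (drop_lead B) by rewrite -dvdP_drop_lead.
have [B' [dDB' nd_lead']] := IH _ (size_drop_lead B_neq0) ndD.
exists B'; split=> //; rewrite -(subrK (drop_lead B) B) -addrA.
by apply: dvdPD => //; apply: dvdP_sub_drop_lead.
Qed.

(* If B' has degree >= 1 and p does not divide its leading coefficient, then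
   the leading coefficient of C \Po B' is lead C * (lead B')^deg C, so a prime
   dividing C \Po B' divides lead C. *)
Lemma primeR_dvd_lead_comp p C (B' : {poly R}) : primeR p -> (1 < size B')%N ->
  ~ dvdR p (lead_coef B') -> dvdP p (C \Po B') -> dvdR p (lead_coef C).
Proof.
move=> p_prime B'_gt1 nd_lead /(_ (size (C \Po B')).-1).
rewrite -lead_coefE lead_coef_comp //.
case: (p_prime) => _ [_ /[apply]] [//|/(primeR_dvdX p_prime)].
by move/nd_lead.
Qed.

(* Reduce B modulo p to B' of positive degree with a leading
   coefficient prime to p, then peel off leading terms of C one at a time. *)
Lemma primeR_dvd_comp p B C : primeR p -> B`_0 = 0 -> ~ dvdP p B ->
  dvdP p (C \Po B) -> dvdP p C.
Proof.
move=> p_prime B0 ndB; have [B' [dBB' nd_lead]] := congr_lead_nondvd ndB.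
have B'_gt1 : (1 < size B')%N.
  rewrite ltnNge; apply: contra_notN nd_lead => B'_le1.
  have := dBB' 0%N; rewrite coefB B0 sub0r => /dvdRN; rewrite opprK lead_coefE.
  by case: (size B') B'_le1 => [|[]].
elim/poly_size_ind: C => C IH dCB.
have dCB' : dvdP p (C \Po B').
  by rewrite -[C \Po B'](subKr (C \Po B)); apply: dvdPB => //; apply: dvdP_compr.
have d_lead := primeR_dvd_lead_comp p_prime B'_gt1 nd_lead dCB'.
have [->|C_neq0] := eqVneq C 0; first exact: dvdP0.
apply/(dvdP_drop_lead d_lead)/IH; first exact: size_drop_lead.
rewrite -(subKr C (drop_lead C)) comp_polyB; apply: dvdPB => //.
exact/dvdP_compl/dvdP_sub_drop_lead.
Qed.

Lemma coef_quotients (d : nat -> R) P : (forall i, dvdR (d i) P`_i) ->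
  exists P', forall i, P`_i = P'`_i * d i.
Proof.
move=> dP; pose f i := proj1_sig (constructive_indefinite_description _ (dP i)).
have f_spec i : P`_i = f i * d i.
  exact: proj2_sig (constructive_indefinite_description _ (dP i)).
exists (\poly_(i < size P) f i) => i; rewrite coef_poly.
by case: ltnP => [_|le_Pi]; [apply: f_spec | rewrite mul0r nth_default].
Qed.

Lemma dvdP_scale_cancel c e P : c != 0 -> dvdP (c * e) (c *: P) -> dvdP e P.
Proof.
move=> c_neq0 dcP i; have [x] := dcP i; rewrite coefZ => cPx.
by exists x; apply: (mulfI c_neq0); rewrite cPx mulrCA.
Qed.

Lemma prod_primeR_dvd_comp B (s : seq R) C : B`_0 = 0 ->
  (forall q, q \in s -> primeR q /\ ~ dvdP q B) ->
  dvdP (\prod_(q <- s) q) (C \Po B) -> dvdP (\prod_(q <- s) q) C.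
Proof.
move=> B0; elim: s C => [|q s IHs] C s_primes.
  by rewrite big_nil => _ i; exists C`_i; rewrite mulr1.
have [q_prime ndB] := s_primes q (mem_head _ _).
rewrite big_cons => dCB.
have [C' C_eq] : exists C', C = q *: C'.
  have [|C' C'_spec] := @coef_quotients (fun=> q) C.
    apply: (primeR_dvd_comp q_prime B0 ndB) => i.
    by apply: dvdR_trans (dCB i); exists (\prod_(r <- s) r); rewrite mulrC.
  by exists C'; apply/polyP => i; rewrite coefZ C'_spec mulrC.
have q_neq0 : q != 0 by case: q_prime.
have dC' : dvdP (\prod_(r <- s) r) C'.
  apply: IHs => [r r_s|]; first by apply: s_primes; rewrite in_cons r_s orbT.
  by apply: (dvdP_scale_cancel q_neq0); rewrite -comp_polyZ -C_eq.
by rewrite C_eq => i; rewrite coefZ; have [x ->] := dC' i; exists x; rewrite mulrCA.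
Qed.

End Divisibility.

Section UniqueFactorization.
Variable R : idomainType.
Hypothesis R_UFD : is_UFD R.

Lemma unit_mul_irreducibles (x : R) : x != 0 -> exists (s : seq R) (u : R),
  [/\ forall y, y \in s -> irreducibleR y, u \is a GRing.unit
    & x = u * \prod_(y <- s) y].
Proof.
move=> x_neq0; have [x_unit | x_nunit] := boolP (x \is a GRing.unit).
  by exists [::], x; rewrite big_nil mulr1.
have [s [s_irr ->]] := R_UFD.1 x x_neq0 x_nunit.
by exists s, 1; rewrite unitr1 mul1r.
Qed.

(* In a UFD irreducible elements are prime: if q | a * c, compare the
   factorization of a * c with q times the factorization of the cofactor. *)
Lemma irreducibleR_prime (q : R) : irreducibleR q -> primeR q.
Proof.
move=> q_irr; have [q_neq0 [q_nunit _]] := q_irr.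
split=> //; split=> // a c [t ac_eq].
have [-> | a_neq0] := eqVneq a 0; first by left; apply: dvdR0.
have [-> | c_neq0] := eqVneq c 0; first by right; apply: dvdR0.
have [a_unit | a_nunit] := boolP (a \is a GRing.unit).
  by right; exists (a^-1 * t); rewrite -mulrA -ac_eq mulKr.
have [c_unit | c_nunit] := boolP (c \is a GRing.unit).
  by left; exists (t * c^-1); rewrite mulrAC -ac_eq mulrK.
have t_neq0 : t != 0.
  by apply: contraNneq (mulf_neq0 a_neq0 c_neq0) => t0; rewrite ac_eq t0 mul0r.
have [st [u [st_irr u_unit t_eq]]] := unit_mul_irreducibles t_neq0.
have [sa [sa_irr a_eq]] := R_UFD.1 a a_neq0 a_nunit.
have [sc [sc_irr c_eq]] := R_UFD.1 c c_neq0 c_nunit.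
have [|||t' [perm_t' [size_t' assoc_t']]] := R_UFD.2 (q :: st) (sa ++ sc).
- by move=> y; rewrite in_cons => /predU1P [->|/st_irr].
- by move=> y; rewrite mem_cat => /orP [/sa_irr|/sc_irr].
- exists u; split=> //; rewrite big_cat big_cons /= -a_eq -c_eq ac_eq t_eq.
  by rewrite -mulrA [q * _]mulrC.
have [v [_ t'0_eq]] := assoc_t' 0%N isT.
have q_t'0 : dvdR q (nth 0 t' 0) by exists v.
have : nth 0 t' 0 \in sa ++ sc by rewrite (perm_mem perm_t') mem_nth // -size_t'.
rewrite mem_cat => /orP [t'0_sa | t'0_sc].
  by left; rewrite a_eq; apply: dvdR_trans q_t'0 (dvdR_prod_mem t'0_sa).
by right; rewrite c_eq; apply: dvdR_trans q_t'0 (dvdR_prod_mem t'0_sc).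
Qed.

End UniqueFactorization.

(* Homogenization: [homog n c p] = \sum_(i < n) p_i c^(n - i) X^i, which is
   c^n p(X / c) whenever deg p < n and c is invertible. *)
Definition homog (R : nzSemiRingType) (n : nat) (c : R) (p : {poly R}) :
  {poly R} :=
  \poly_(i < n) (p`_i * c ^+ (n - i)).

Lemma map_homog (aR rR : nzRingType) (f : {rmorphism aR -> rR}) n (c : aR)
    (p : {poly aR}) :
  map_poly f (homog n c p) = homog n (f c) (map_poly f p).
Proof.
apply/polyP => i; rewrite /homog coef_map /= !(@coef_poly _ n) coef_map /=.
by case: ltnP => _; rewrite ?rmorphM ?rmorphXn ?rmorph0.
Qed.

Lemma coef_comp_scaleX (R : comNzRingType) (p : {poly R}) c i :
  (p \Po (c *: 'X))`_i = p`_i * c ^+ i.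
Proof.
rewrite comp_polyE (eq_bigr (fun j : 'I_ _ => (p`_j * c ^+ j) *: 'X^j)); last first.
  by move=> j _; rewrite exprZn scalerA.
rewrite -(poly_def (size p) (fun j => p`_j * c ^+ j)) coef_poly.
by case: ltnP => // le_pi; rewrite nth_default ?mul0r.
Qed.

Lemma homog_comp (F : fieldType) n (c : F) (p q : {poly F}) :
  c != 0 -> (size p <= n)%N ->
  homog n c p \Po q = c ^+ n *: (p \Po (c^-1 *: q)).
Proof.
move=> c_neq0 le_pn.
have -> : c^-1 *: q = (c^-1 *: 'X) \Po q by rewrite comp_polyZ comp_polyX.
rewrite comp_polyA -comp_polyZ; congr (_ \Po q); apply/polyP => i.
rewrite coef_poly coefZ coef_comp_scaleX; case: ltnP => [lt_in | le_ni].
  rewrite -{2}(subnK (ltnW lt_in)) exprD exprVn -mulrA [c ^+ i * _]mulrC.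
  by rewrite mulfVK ?expf_neq0 // mulrC.
by rewrite nth_default ?mul0r ?mulr0 // (leq_trans le_pn).
Qed.

Section ClearingDenominators.
Variable R : idomainType.
Local Notation tofracP := (map_poly (@tofrac R)).

Lemma homog_comp_integral n (A B Q : {poly R}) (b : R) :
  b != 0 -> (size A <= n)%N ->
  tofracP Q = tofracP A \Po ((tofrac b)^-1 *: tofracP B) ->
  homog n b A \Po B = b ^+ n *: Q.
Proof.
move=> b_neq0 le_An Q_eq.
have tofrac_inj : injective (@tofrac R).
  by move=> x y /eqP; rewrite tofrac_eq => /eqP.
apply: (map_inj_poly tofrac_inj (rmorph0 _)).
rewrite map_comp_poly map_homog map_polyZ rmorphXn Q_eq homog_comp //.
  by rewrite tofrac_eq0.
by rewrite size_map_inj_poly ?rmorph0.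
Qed.

Lemma dvdP_homog_coef n (A : {poly R}) (b : R) : b != 0 -> (size A <= n)%N ->
  dvdP (b ^+ n) (homog n b A) -> forall k, dvdR (b ^+ k) A`_k.
Proof.
move=> b_neq0 le_An dH k; have [lt_kn | le_nk] := ltnP k n; last first.
  by rewrite nth_default ?(leq_trans le_An) //; apply: dvdR0.
have [x] := dH k; rewrite coef_poly lt_kn -[in b ^+ n](subnK (ltnW lt_kn)).
rewrite exprD mulrA mulrAC.
by move=> /(mulIf (expf_neq0 (n - k) b_neq0)) ->; exists x.
Qed.

End ClearingDenominators.

Theorem mainTheorem2 (R : idomainType) (hR : is_UFD R)
    (A B : {poly R}) (b : R)
    (hA0 : A.[0] = 0) (hB0 : B.[0] = 0)
    (hb : b != 0) (hBb : poly_const_coprime B b)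
    (hint : exists Q : {poly R},
        map_poly (@tofrac R) Q =
        map_poly (@tofrac R) A \Po ((@tofrac R b)^-1 *: map_poly (@tofrac R) B)) :
  (exists C : {poly R}, A = C \Po (b *: 'X)) /\
  (forall k : nat, (1 <= k)%N -> dvdR (b ^+ k) A`_k).
Proof.
have [Q Q_eq] := hint; set n := size A.
have HB_eq := homog_comp_integral hb (leqnn n) Q_eq.
have [s [u [s_irr u_unit bn_eq]]] := unit_mul_irreducibles hR (expf_neq0 n hb).
have s_primes q : q \in s -> primeR q /\ ~ dvdP q B.
  move=> q_s; have q_prime := irreducibleR_prime hR (s_irr q q_s).
  split=> // dqB; apply: (hBb q q_prime) => //.
  apply: (primeR_dvdX (n := n) q_prime); rewrite bn_eq.
  by apply: dvdRMl; apply: dvdR_prod_mem.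
have dH : dvdP (b ^+ n) (homog n b A).
  have B0 : B`_0 = 0 by rewrite -horner_coef0.
  have dprod : dvdP (\prod_(q <- s) q) (homog n b A).
    apply: (prod_primeR_dvd_comp B0 s_primes); rewrite HB_eq bn_eq => j.
    by rewrite coefZ; exists (u * Q`_j); rewrite mulrAC.
  by rewrite bn_eq => i; have [x ->] := dprod i; exists (x / u); rewrite mulrA divrK.
have dA := dvdP_homog_coef hb (leqnn n) dH.
split=> [|k _]; last exact: dA.
have [C C_spec] := coef_quotients dA.
by exists C; apply/polyP => i; rewrite coef_comp_scaleX C_spec.
Qed.
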